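(* Let $G$ be a compact Lie group acting linearly and unitarily on $\mathbb{C}^n$ with moment map $\mu:\mathbb{C}^n\to\mathfrak{g}^*$, let $\alpha\in\mathfrak{g}^*$ be central, and let $\mathfrak{M}=(\mu_{\mathbb{R}}^{-1}(\alpha)\cap\mu_{\mathbb{C}}^{-1}(0))/G$ with the function $\Phi:\mathfrak{M}\to\mathbb{R}$, $\Phi[z,w]=\tfrac12|w|^2$. If $\mu$ is proper, then $\Phi$ is proper.
   Context: $T^*\mathbb{C}^n=\mathbb{C}^n\times(\mathbb{C}^n)^*$ with points $(z,w)$; $G$ acts on it by the induced action, with real moment map $\mu_{\mathbb{R}}(z,w)=\mu(z)-\mu(w)\in\mathfrak{g}^*$ and complex moment map $\mu_{\mathbb{C}}(z,w)(v)=w(\hat v_z)$ for $v\in\mathfrak{g}_{\mathbb{C}}$, $\hat v_z$ the induced tangent vector at $z$. $[z,w]$ denotes the $G$-orbit of $(z,w)$. The function $\Phi$ is the moment map for the circle action $\tau\cdot[z,w]=[z,\tau w]$, $\tau\in S^1$. *)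

From HB Require Import structures.
From mathcomp Require Import all_boot all_order all_algebra.
From mathcomp Require Import all_classical all_reals all_analysis.
From mathcomp Require Import complex.
Set Implicit Arguments. Unset Strict Implicit. Unset Printing Implicit Defensive.
Import Order.TTheory GRing.Theory Num.Theory.
Import numFieldTopology.Exports numFieldNormedType.Exports.
Local Open Scope classical_set_scope.
Local Open Scope ring_scope.
Local Open Scope complex_scope.

Definition Cplx (R : realType) : numClosedFieldType := R[i].

Section HyperKahlerDefs.
Variables (R : realType) (n : nat).

Local Notation C := (Cplx R).
(* C^n as column vectors, (C^n)^* as row vectors, complex n x n matrices *)
Local Notation Vec := ('cV[C]_n).
Local Notation Cov := ('rV[C]_n).
Local Notation Mat := ('M[C]_n).

Definition adjmx (p q : nat) (A : 'M[C]_(p, q)) : 'M[C]_(q, p) :=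
  (map_mx (fun x : C => Num.conj x) A)^T.

Definition expm (A : Mat) : Mat :=
  limn (series (fun k : nat => ((k`!)%:R : C)^-1 *: A ^+ k)).

Definition unitary_mx (g : Mat) : Prop := adjmx g *m g = 1%:M.

(* G is a compact subgroup of U(n) (the image of the unitary representation) *)
Definition compact_unitary_group (G : set Mat) : Prop :=
  [/\ G 1%:M,
      (forall g h, G g -> G h -> G (g *m h)),
      (forall g, G g -> G (invmx g)),
      (forall g, G g -> unitary_mx g) & compact G].

Definition lie_alg (G : set Mat) : set Mat :=
  [set X | forall t : R, G (expm ((t%:C) *: X))].

Definition lie_type (G : set Mat) := {X : Mat | lie_alg G X}.

(* standard (homogeneous quadratic) moment map mu : C^n -> g^*,
   mu(z)(X) = (i/2) z^* X z  (real for X skew-Hermitian) *)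
Definition mom (z : Vec) (X : Mat) : R :=
  complex.Re ((('i : R[i]) / 2%:R) * (adjmx z *m X *m z) 0 0 : R[i]).

Definition mom_g (G : set Mat) (z : Vec) : {ptws lie_type G -> R} :=
  fun X => mom z (sval X).

(* mu is proper as a map C^n -> g^*  (g^* carrying the topology of pointwise
   evaluation on g, which is the usual one; g^* is closed in R^g) *)
Definition mom_proper (G : set Mat) : Prop :=
  forall K : set {ptws lie_type G -> R}, compact K -> compact (@mom_g G @^-1` K).

Definition lie_dual (G : set Mat) (alpha : Mat -> R) : Prop :=
  forall (t : R) X Y, lie_alg G X -> lie_alg G Y ->
    alpha ((t%:C) *: X + Y) = t * alpha X + alpha Y.

Definition central (G : set Mat) (alpha : Mat -> R) : Prop :=
  forall g X, G g -> lie_alg G X -> alpha (g *m X *m invmx g) = alpha X.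

(* real and complex moment maps on T^*C^n = C^n x (C^n)^* *)
Definition momR (p : Vec * Cov) (X : Mat) : R := mom p.1 X - mom (adjmx p.2) X.
Definition momC (p : Vec * Cov) (X : Mat) : C := (p.2 *m (X *m p.1)) 0 0.

(* mu_R^{-1}(alpha) ∩ mu_C^{-1}(0) ; mu_C vanishes on g_C iff it vanishes on g
   by complex linearity *)
Definition level (G : set Mat) (alpha : Mat -> R) : set (Vec * Cov) :=
  [set p | (forall X, lie_alg G X -> momR p X = alpha X) /\
           (forall X, lie_alg G X -> momC p X = 0)].

Definition act (g : Mat) (p : Vec * Cov) : Vec * Cov := (g *m p.1, p.2 *m invmx g).

Definition orbit (G : set Mat) (p : Vec * Cov) : set (Vec * Cov) :=
  [set act g p | g in G].

(* the hyperkahler quotient M, as the set of G-orbits [z,w] in the level set *)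
Definition hkq (G : set Mat) (alpha : Mat -> R) : set (set (Vec * Cov)) :=
  [set O | exists2 p, level G alpha p & O = orbit G p].

(* quotient topology on M: U open iff its preimage in the level set
   is open in the subspace topology *)
Definition hkq_open (G : set Mat) (alpha : Mat -> R)
    (U : set (set (Vec * Cov))) : Prop :=
  U `<=` hkq G alpha /\
  exists V : set (Vec * Cov), open V /\
    [set p | level G alpha p /\ U (orbit G p)] = V `&` level G alpha.

Definition hkq_compact (G : set Mat) (alpha : Mat -> R)
    (S : set (set (Vec * Cov))) : Prop :=
  S `<=` hkq G alpha /\
  forall (I : Type) (F : I -> set (set (Vec * Cov))),
    (forall i, hkq_open G alpha (F i)) -> S `<=` \bigcup_i F i ->
    exists2 J : set I, finite_set J & S `<=` \bigcup_(i in J) F i.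

Definition sqnorm_cov (w : Cov) : R := complex.Re ((w *m adjmx w) 0 0 : R[i]).

(* Phi[z,w] = |w|^2 / 2, evaluated at a chosen representative of the orbit *)
Definition Phi (O : set (Vec * Cov)) : R :=
  sqnorm_cov (xget (0, 0) O).2 / 2%:R.

Definition Phi_proper (G : set Mat) (alpha : Mat -> R) : Prop :=
  forall K : set R, compact K ->
    hkq_compact G alpha [set O | hkq G alpha O /\ K (Phi O)].

End HyperKahlerDefs.

(** On the level set the real moment map equation reads mu(z) = alpha + mu(w^* )
   on g.  If Phi = |w|^2/2 stays in a compact set K, then w stays in a compact
   box B, so mu(z) stays in the image of B under the continuous map
   w |-> alpha + mu(w^* ), which is compact; as mu is proper, z stays in a
   compact set too.  The points of the level set with |w|^2/2 in K are thus a
   closed subset of a compact set.  Since G acts unitarily, |w|^2/2 is the same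
   on every representative of an orbit, so Phi^-1(K) is the image of this
   compact set under the quotient map, and is compact. *)
From Pilot Require Import Defs.
From HB Require Import structures.
From mathcomp Require Import all_boot all_order all_algebra.
From mathcomp Require Import all_classical all_reals all_analysis.
From mathcomp Require Import complex.
From mathcomp Require Import ring lra finmap.
Import Order.TTheory GRing.Theory Num.Theory.
Import numFieldTopology.Exports numFieldNormedType.Exports.
Local Open Scope classical_set_scope.
Local Open Scope ring_scope.
Local Open Scope complex_scope.

Section complex_topology.
Context {R : realType}.
Local Notation C := (Cplx R).

Lemma conjC_continuous : continuous (fun x : C => Num.conj x).
Proof.
move=> x; apply/(@cvgrPdist_lt _ C _ (nbhs x)) => e e0.
near=> y; rewrite -rmorphB norm_conjC.
by near: y; exact: cvgr_dist_lt.
Unshelve. all: by end_near. Qed.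

Lemma Re_continuous : continuous (fun x : C => complex.Re x : R).
Proof.
move=> x; apply/(@cvgrPdist_lt _ R _ (nbhs x)) => e e0.
have ReB (y : C) : complex.Re x - complex.Re y = complex.Re (x - y).
  by case: x {e0}; case: y.
have e0C : 0 < e%:C :> C by rewrite ltcR.
near=> y; rewrite ReB -ltcR; apply: le_lt_trans (normc_ge_Re (x - y)) _.
by near: y; exact: (@cvgr_dist_lt _ _ _ (nbhs x) _ id x cvg_id _ e0C).
Unshelve. all: by end_near. Qed.

Lemma realC_continuous : continuous (fun a : R => a%:C : C).
Proof.
move=> a; apply/(@cvgrPdist_lt _ C _ (nbhs a)) => -[e e'].
rewrite ltcE /= => /andP[/eqP -> e0].
near=> t; rewrite -rmorphB normc_def /= expr0n addr0 sqrtr_sqr ltcR.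
by near: t; exact: cvgr_dist_lt.
Unshelve. all: by end_near. Qed.

Definition complex_of_pair (ab : R * R) : C := ab.1%:C + 'i * ab.2%:C.

Lemma complex_of_pair_continuous : continuous complex_of_pair.
Proof.
move=> ab.
have realC_cvg (f : R * R -> R) :
    f @ ab --> f ab -> (fun t => (f t)%:C : C) @ ab --> ((f ab)%:C : C).
  exact: (continuous_cvg _ (realC_continuous _)).
apply: cvgD; first exact: realC_cvg cvg_fst.
by apply: cvgM; [exact: cvg_cst | exact: realC_cvg cvg_snd].
Qed.

Definition csquare (r : R) : set C := complex_of_pair @` (`[-r, r] `*` `[-r, r]).

Lemma csquare_compact r : compact (csquare r).
Proof.
apply: continuous_compact; last by apply: compact_setX; exact: segment_compact.
exact: continuous_subspaceT complex_of_pair_continuous.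
Qed.

Lemma csquare_ReIm r (x : C) :
  `|complex.Re x| <= r -> `|complex.Im x| <= r -> csquare r x.
Proof.
rewrite !ler_norml => Rex Imx; exists (complex.Re x, complex.Im x).
  by split; rewrite /= in_itv.
by rewrite [RHS]complexE.
Qed.

End complex_topology.

Definition entrywise_cvg {R : realType} {T : Type} (F : set_system T) {m k}
    (f : T -> 'M[Cplx R]_(m, k)) (a : 'M[Cplx R]_(m, k)) :=
  forall i j, (fun t => f t i j) @ F --> a i j.

Section entrywise_convergence.
Context {R : realType} {T : Type} {F : set_system T} {FF : Filter F}.
Local Notation C := (Cplx R).

Lemma entrywise_cvg_cvg {m k} {f : T -> 'M[C]_(m, k)} {a} :
  f @ F --> a -> entrywise_cvg F f a.
Proof.
by move=> fa i j; exact: (continuous_cvg _ (@coord_continuous C m k i j a) fa).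
Qed.

Lemma entrywise_cvg_cst {m k} (a : 'M[C]_(m, k)) : entrywise_cvg F (fun=> a) a.
Proof. by move=> i j; exact: cvg_cst. Qed.

Lemma entrywise_cvg_mul {m k l}
    {f : T -> 'M[C]_(m, k)} {g : T -> 'M[C]_(k, l)} {a b} :
  entrywise_cvg F f a -> entrywise_cvg F g b ->
  entrywise_cvg F (fun t => f t *m g t) (a *m b).
Proof.
move=> fa gb i j; rewrite mxE.
under eq_fun do rewrite mxE.
apply: cvg_big => //; first exact: add_continuous.
by move=> q _; apply: cvgM; [exact: fa | exact: gb].
Qed.

Lemma entrywise_cvg_adj {m k} {f : T -> 'M[C]_(m, k)} {a} :
  entrywise_cvg F f a -> entrywise_cvg F (fun t => adjmx (f t)) (adjmx a).
Proof.
move=> fa i j; rewrite !mxE.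
under eq_fun do rewrite !mxE.
exact: (continuous_cvg _ (conjC_continuous _) (fa j i)).
Qed.

Lemma mom_cvg {n} {f : T -> 'cV[C]_n} {z X} :
  entrywise_cvg F f z -> (fun t => mom (f t) X) @ F --> mom z X.
Proof.
move=> fz; apply: (continuous_cvg _ (Re_continuous _)).
apply: cvgM; first exact: cvg_cst.
exact: (entrywise_cvg_mul
  (entrywise_cvg_mul (entrywise_cvg_adj fz) (entrywise_cvg_cst X)) fz).
Qed.

End entrywise_convergence.

Section entrywise_projections.
Context {R : realType} {m k m' k' : nat}.
Implicit Type p : 'M[Cplx R]_(m, k) * 'M[Cplx R]_(m', k').

Lemma entrywise_cvg_fst p : entrywise_cvg (nbhs p) fst p.1.
Proof. exact: entrywise_cvg_cvg (@cvg_fst _ _ (nbhs p.1) (nbhs p.2) _). Qed.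

Lemma entrywise_cvg_snd p : entrywise_cvg (nbhs p) snd p.2.
Proof. exact: entrywise_cvg_cvg (@cvg_snd _ _ (nbhs p.1) (nbhs p.2) _). Qed.

End entrywise_projections.

Section unitary_invariance.
Context {R : realType}.
Local Notation C := (Cplx R).

Lemma adjmxM m k l (A : 'M[C]_(m, k)) (B : 'M[C]_(k, l)) :
  adjmx (A *m B) = adjmx B *m adjmx A.
Proof.
apply/matrixP => i j; rewrite !mxE rmorph_sum; apply: eq_bigr => q _.
by rewrite !mxE rmorphM mulrC.
Qed.

Lemma adjmxK m k (A : 'M[C]_(m, k)) : adjmx (adjmx A) = A.
Proof. by apply/matrixP => i j; rewrite !mxE conjCK. Qed.

Lemma unitary_invmx n (g : 'M[C]_n) : unitary_mx g -> invmx g = adjmx g.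
Proof.
move=> gU; have [_ g_unit] := mulmx1_unit gU.
by rewrite -[LHS]mul1mx -gU -mulmxA mulmxV // mulmx1.
Qed.

Lemma sqnorm_cov_unitary n (w : 'rV[C]_n) g :
  unitary_mx g -> sqnorm_cov (w *m invmx g) = sqnorm_cov w.
Proof.
move=> gU; rewrite unitary_invmx // /sqnorm_cov adjmxM adjmxK.
by rewrite -mulmxA (mulmxA (adjmx g)) gU mul1mx.
Qed.

End unitary_invariance.

Section covector_boxes.
Context {R : realType} {n : nat}.
Local Notation C := (Cplx R).

Lemma sqnorm_covE (w : 'rV[C]_n) :
  sqnorm_cov w = \sum_j (complex.Re (w 0 j) ^+ 2 + complex.Im (w 0 j) ^+ 2).
Proof.
have ReD : {morph (fun x : C => complex.Re x) : x y / x + y >-> (x + y)%R}.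
  by move=> [? ?] [? ?].
rewrite /sqnorm_cov mxE (big_morph _ ReD (erefl : complex.Re (0 : C) = 0)).
by apply: eq_bigr => j _; rewrite !mxE; case: (w 0 j) => a b /=; ring.
Qed.

Definition cbox (r : R) : set 'rV[C]_n := [set w | forall j, csquare r (w ord0 j)].

Lemma cbox_compact r : compact (cbox r).
Proof. exact: (rV_compact (fun=> csquare_compact r)). Qed.

Lemma cbox_sqnorm_cov r (w : 'rV[C]_n) :
  0 <= r -> sqnorm_cov w <= r ^+ 2 -> cbox r w.
Proof.
move=> r0 wr j; set x := w ord0 j.
have x_le : complex.Re x ^+ 2 + complex.Im x ^+ 2 <= sqnorm_cov w.
  rewrite sqnorm_covE (bigD1 j) //= lerDl.
  by apply: sumr_ge0 => i _; rewrite addr_ge0 ?sqr_ge0.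
have := sqr_ge0 (complex.Re x); have := sqr_ge0 (complex.Im x).
by move=> *; apply: csquare_ReIm; rewrite ler_norml; apply/andP; split; nra.
Qed.

End covector_boxes.

Section level_set.
Context {R : realType} {n : nat} (G : set 'M[Cplx R]_n) (alpha : 'M[Cplx R]_n -> R).
Local Notation C := (Cplx R).
Local Notation Vec := 'cV[C]_n.
Local Notation Cov := 'rV[C]_n.

Lemma level_closed : closed (level G alpha).
Proof.
have -> : level G alpha = \bigcap_(X in lie_alg G)
    ((fun p => momR p X) @^-1` [set alpha X] `&` (fun p => momC p X) @^-1` [set 0]).
  apply/seteqP; split=> [p [pR pC] X gX | p pX].
    by split; [exact: pR | exact: pC].
  by split=> X gX; have [] := pX X gX.
apply: closed_bigI => X _; apply: closedI; apply: preimage_closed.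
- move=> p _; apply: cvgB; first exact: mom_cvg (entrywise_cvg_fst p).
  exact: mom_cvg (entrywise_cvg_adj (entrywise_cvg_snd p)).
- by apply: compact_closed; [exact: norm_hausdorff | exact: compact_set1].
- move=> p _; exact: (entrywise_cvg_mul (entrywise_cvg_snd p)
    (entrywise_cvg_mul (entrywise_cvg_cst X) (entrywise_cvg_fst p))).
- by apply: compact_closed; [exact: norm_hausdorff | exact: compact_set1].
Qed.

Definition Phi_level_preimage (K : set R) : set (Vec * Cov) :=
  [set p | level G alpha p /\ K (sqnorm_cov p.2 / 2%:R)].

Lemma Phi_level_preimage_closed K : closed K -> closed (Phi_level_preimage K).
Proof.
move=> Kcl; apply: closedI; first exact: level_closed.
apply: preimage_closed => // p _; apply: cvgM; last exact: cvg_cst.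
apply: (continuous_cvg _ (Re_continuous _)).
exact: (entrywise_cvg_mul (entrywise_cvg_snd p)
  (entrywise_cvg_adj (entrywise_cvg_snd p))).
Qed.

Definition mom_shift (w : Cov) : {ptws lie_type G -> R} :=
  fun X => alpha (sval X) + mom (adjmx w) (sval X).

Lemma mom_shift_continuous : continuous mom_shift.
Proof.
move=> w.
apply/(@pointwise_cvgP (discrete_topology {classic (lie_type G)}) R _ _
  (fmap_filter _ (nbhs_filter w))) => X.
change ((fun v : Cov => alpha (sval X) + mom (adjmx v) (sval X)) @ w -->
  (alpha (sval X) + mom (adjmx w) (sval X) : R)).
apply: (cvgD (FF := nbhs_filter w)); first exact: cvg_cst.
exact: mom_cvg (entrywise_cvg_adj (entrywise_cvg_cvg (@cvg_id _ (nbhs w)))).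
Qed.

Lemma mom_g_level p : level G alpha p -> mom_g (G := G) p.1 = mom_shift p.2.
Proof.
move=> [pR _]; apply/funext => X.
by rewrite /mom_shift -(pR _ (svalP X)) /momR subrK.
Qed.

Lemma Phi_level_preimage_compact K :
  mom_proper G -> compact K -> compact (Phi_level_preimage K).
Proof.
move=> mu_proper Kc.
have [b b0 Kb] : exists2 b : R, 0 <= b & forall x, K x -> `|x| <= b.
  have [M [M_real KM]] := compact_bounded Kc.
  exists (`|M| + 1); first by rewrite addr_ge0.
  by apply: KM; rewrite (le_lt_trans (real_ler_norm M_real)) // ltrDl.
pose r := 2 * b + 1.
have r0 : 0 <= r by rewrite addr_ge0 ?mulr_ge0.
have box_compact := cbox_compact (n := n) r.
have image_compact : compact (mom_shift @` cbox r).
  apply: continuous_compact => //.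
  exact: continuous_subspaceT mom_shift_continuous.
apply: subclosed_compact (compact_setX (mu_proper _ image_compact) box_compact) _.
  by apply: Phi_level_preimage_closed; exact: compact_closed Kc.
move=> p [p_level /Kb]; rewrite ler_norml => /andP[_ Phi_le].
have p2_box : cbox r p.2.
  apply: cbox_sqnorm_cov => //; rewrite /r; nra.
by split=> //=; rewrite mom_g_level //; exists p.2.
Qed.

End level_set.

(* [compact_cover] is only stated for pointed spaces. *)
HB.instance Definition _ (R : realType) (n : nat) :=
  Pointed.on ('cV[Cplx R]_n * 'rV[Cplx R]_n)%type.

Section quotient.
Context {R : realType} {n : nat} (G : set 'M[Cplx R]_n) (alpha : 'M[Cplx R]_n -> R).
Local Notation Vec := 'cV[Cplx R]_n.
Local Notation Cov := 'rV[Cplx R]_n.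

Lemma Phi_orbit p : compact_unitary_group G ->
  Phi (Defs.orbit G p) = sqnorm_cov p.2 / 2%:R.
Proof.
case=> G1 _ _ G_unitary _; rewrite /Phi.
have [g Gg <-] : Defs.orbit G p (xget (0, 0) (Defs.orbit G p)).
  by apply: xgetPex; exists (act 1%:M p); exists 1%:M.
by rewrite sqnorm_cov_unitary //; exact: G_unitary.
Qed.

Lemma hkq_compact_orbits (P : set (Vec * Cov)) :
  P `<=` level G alpha -> compact P -> hkq_compact G alpha (Defs.orbit G @` P).
Proof.
move=> P_level; rewrite compact_cover => P_cover.
split=> [_ [p Pp <-] | I F F_open orbits_covered].
  by exists p; [exact: P_level |].
have [V V_open] := choice (fun i => (F_open i).2).
have P_covered : P `<=` cover (setT : set {classic I}) V.
  move=> p Pp; have [i _ Fi] := orbits_covered _ (imageP _ Pp).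
  exists i => //.
  have : [set q | level G alpha q /\ F i (Defs.orbit G q)] p.
    by split=> //; exact: P_level.
  by rewrite (V_open i).2 => -[].
have [D _ D_cover] :=
  P_cover {classic I} setT V (fun i _ => (V_open i).1) P_covered.
exists [set` D]; first exact: (finite_fset D).
move=> _ [p Pp <-]; have [i Di Vi] := D_cover p Pp.
exists i => //.
have : (V i `&` level G alpha) p by split=> //; exact: P_level.
by rewrite -(V_open i).2 => -[].
Qed.

End quotient.

Theorem mainTheorem2 (R : realType) (n : nat) (G : set 'M[Cplx R]_n)
  (alpha : 'M[Cplx R]_n -> R) :
  compact_unitary_group G ->
  lie_dual G alpha ->
  central G alpha ->
  mom_proper G ->
  Phi_proper G alpha.
Proof.
(* Linearity and centrality of alpha only serve to make the level set
   G-invariant, which [hkq], built from orbits of points of the level set,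
   does not require. *)
move=> G_cpt _ _ mu_proper K Kc.
have -> : [set O | hkq G alpha O /\ K (Phi O)] =
    Defs.orbit G @` Phi_level_preimage G alpha K.
  apply/seteqP; split=> [Q [[p p_level ->] KQ] | _ [p [p_level Kp] <-]].
    by exists p => //; split=> //; rewrite -(Phi_orbit G p G_cpt).
  by split; [exists p | rewrite (Phi_orbit G p G_cpt)].
apply: hkq_compact_orbits; first by move=> p [].
exact: Phi_level_preimage_compact.
Qed.
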